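(* Let $(V,Y_1,\mathbf 1,T_1)$ be a vertex algebra (in dimension 1) equipped with an action of $\mathfrak c_D$ such that the generator $T_1\in\mathfrak c_D$ acts as the translation operator of $V$. If the action of $\mathfrak c_D$ is local and $\mathfrak c_D\mathbf 1=0$, then for all $a\in V$ and $2\le\alpha,\beta\le D$: $$[T_\alpha,Y_1(a,x)]=Y_1(T_\alpha a,x),\qquad [H,Y_1(a,x)]=Y_1(Ha,x)+x\partial_xY_1(a,x),$$ $$[\Omega_{\alpha\beta},Y_1(a,x)]=Y_1(\Omega_{\alpha\beta}a,x),\qquad [\Omega_{1\alpha},Y_1(a,x)]=Y_1(\Omega_{1\alpha}a,x)+xY_1(T_\alpha a,x),$$ $$[C_\alpha,Y_1(a,x)]=Y_1(C_\alpha a,x)+2xY_1(\Omega_{1\alpha}a,x)+x^2Y_1(T_\alpha a,x),$$ $$[C_1,Y_1(a,x)]=Y_1(C_1a,x)-2xY_1(Ha,x)-x^2\partial_xY_1(a,x).$$ Conversely, if these commutation relations hold for all $a\in V$, then the action of $\mathfrak c_D$ is local and annihilates the vacuum.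
   Context: A vertex algebra (in dimension 1) is a complex superspace $V$ with even vacuum $\mathbf 1$, even map $a\otimes b\mapsto Y_1(a,x)b\in V(\!(x)\!)$, and even $T_1$ with $T_1\mathbf 1=0$, $Y_1(\mathbf 1,x)=\mathrm{id}$, $Y_1(a,x)\mathbf 1\in V[\![x]\!]$ with value $a$ at $x=0$, $[T_1,Y_1(a,x)]=\partial_xY_1(a,x)$, and locality: $(x-y)^{N}[Y_1(a,x),Y_1(b,y)]=0$ for some $N=N_{a,b}$ (supercommutator). An operator $X\in\operatorname{End}V$ is local if for all $a,b$ there is $N$ with $(x-y)^N[[X,Y_1(a,x)],Y_1(b,y)]=0$; the action of $\mathfrak c_D$ is local if every element acts as a local operator. $\mathfrak c_D$ is the Lie algebra spanned by $T_\alpha$, $H$, $\Omega_{\alpha\beta}=-\Omega_{\beta\alpha}$, $C_\alpha$ ($1\le\alpha,\beta\le D$) with relations: $[H,\Omega_{\alpha\beta}]=[T_\alpha,T_\beta]=[C_\alpha,C_\beta]=0$; $[\Omega_{\alpha\beta},T_\gamma]=\delta_{\alpha\gamma}T_\beta-\delta_{\beta\gamma}T_\alpha$; $[\Omega_{\alpha\beta},C_\gamma]=\delta_{\alpha\gamma}C_\beta-\delta_{\beta\gamma}C_\alpha$; $[H,T_\alpha]=T_\alpha$; $[H,C_\alpha]=-C_\alpha$; $[T_\alpha,C_\beta]=2\delta_{\alpha\beta}H-2\Omega_{\alpha\beta}$; $[\Omega_{\alpha_1\beta_1},\Omega_{\alpha_2\beta_2}]=\delta_{\alpha_1\alpha_2}\Omega_{\beta_1\beta_2}+\delta_{\beta_1\beta_2}\Omega_{\alpha_1\alpha_2}-\delta_{\alpha_1\beta_2}\Omega_{\beta_1\alpha_2}-\delta_{\beta_1\alpha_2}\Omega_{\alpha_1\beta_2}$.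 It acts on $V$ by even operators. *)

From mathcomp Require Import all_boot all_order all_algebra.
From mathcomp Require Import reals complex.
Set Implicit Arguments. Unset Strict Implicit. Unset Printing Implicit Defensive.
Import Order.TTheory GRing.Theory Num.Theory.
Local Open Scope ring_scope.

Section Defs.
Variable (R : realType).
Local Notation C := R[i].
Variable (V : lmodType C).

Definition linop (f : V -> V) : Prop :=
  forall (c : C) (u v : V), f (c *: u + v) = c *: f u + f v.

Definition subspace (S : V -> Prop) : Prop :=
  S 0 /\ forall (c : C) (u v : V), S u -> S v -> S (c *: u + v).

Definition superspace (ev od : V -> Prop) : Prop :=
  [/\ subspace ev, subspace od,
      (forall v, exists v0 v1, [/\ ev v0, od v1 & v = v0 + v1]) &
      (forall v, ev v -> od v -> v = 0)].

Definition homog (ev od : V -> Prop) (p : bool) (v : V) : Prop :=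
  if p then od v else ev v.

Definition even_op (ev od : V -> Prop) (f : V -> V) : Prop :=
  forall p v, homog ev od p v -> homog ev od p (f v).

(* ---------- formal series ----------
   A field Y : V -> int -> V -> V encodes Y_1(a,x)b = sum_n (Y a n b) x^n. *)

Definition opcomm (X F : V -> V) (v : V) : V := X (F v) - F (X v).

(* coefficient of x^m y^k in the supercommutator [A(x), B(y)] applied to v,
   where A(x) = sum_m A m x^m, B(y) = sum_k B k y^k and s = (-1)^{p(A)p(B)} *)
Definition scomm_coef (s : C) (A B : int -> V -> V) (m k : int) (v : V) : V :=
  A m (B k v) - s *: B k (A m v).

(* coefficient of x^m y^k in (x - y)^N F(x,y), F = sum F m k x^m y^k *)
Definition mulxyN (N : nat) (F : int -> int -> V) (m k : int) : V :=
  \sum_(j < N.+1) (((-1) ^+ j * ('C(N, j))%:R) *: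
                    F (m - (N - j)%:Z) (k - (j : nat)%:Z)).

Definition psign (p q : bool) : C := (-1) ^+ (p && q).

Definition vertex_algebra (ev od : V -> Prop) (vac : V)
  (Y : V -> int -> V -> V) (T1 : V -> V) : Prop :=
  superspace ev od /\ ev vac /\
      (forall n (c : C) a a' b, Y (c *: a + a') n b = c *: Y a n b + Y a' n b) /\
      (forall a n, linop (Y a n)) /\
      (forall p q a b n, homog ev od p a -> homog ev od q b ->
                         homog ev od (p (+) q) (Y a n b)) /\
      (* Y(a,x)b in V((x)) *)
      (forall a b, exists N : int, forall n, n < N -> Y a n b = 0) /\
      (linop T1 /\ even_op ev od T1 /\ T1 vac = 0) /\
      (forall n b, Y vac n b = if n == 0 then b else 0) /\
      (* Y(a,x)1 in V[[x]] with value a at x = 0 *)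
      (forall a n, n < 0 -> Y a n vac = 0) /\
      (forall a, Y a 0 vac = a) /\
      (* [T1, Y(a,x)] = d/dx Y(a,x) *)
      (forall a n b, opcomm T1 (Y a n) b = Y a (n + 1) b *~ (n + 1)) /\
      (forall p q a b, homog ev od p a -> homog ev od q b ->
         exists N : nat, forall m k v,
           mulxyN N (fun m k => scomm_coef (psign p q) (Y a) (Y b) m k v) m k
           = 0).

Definition local_op (ev od : V -> Prop) (Y : V -> int -> V -> V) (X : V -> V)
  : Prop :=
  forall p q a b, homog ev od p a -> homog ev od q b ->
    exists N : nat, forall m k v,
      mulxyN N (fun m k => scomm_coef (psign p q)
                   (fun m => opcomm X (Y a m)) (Y b) m k v) m k = 0.

(* ---------- the Lie algebra c_D acting on V ----------
   The action is given by the images of the spanning elements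
   T_al, H, Om_{al be}, C_al (1 <= al, be <= D), which must be even linear
   operators satisfying the defining relations of c_D. *)
Definition inD (D al : nat) : bool := (1 <= al <= D)%N.

Definition cD_action (ev od : V -> Prop) (D : nat)
  (Tg : nat -> V -> V) (H : V -> V) (Om : nat -> nat -> V -> V)
  (Cg : nat -> V -> V) : Prop :=
      (forall al, inD D al -> linop (Tg al) /\ even_op ev od (Tg al)) /\
      (linop H /\ even_op ev od H) /\
      (forall al be, inD D al -> inD D be -> linop (Om al be) /\ even_op ev od (Om al be)) /\
      (forall al, inD D al -> linop (Cg al) /\ even_op ev od (Cg al)) /\
      (forall al be v, inD D al -> inD D be -> Om al be v = - Om be al v) /\
      (forall al be v, inD D al -> inD D be ->
         [/\ opcomm H (Om al be) v = 0, opcomm (Tg al) (Tg be) v = 0 &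
             opcomm (Cg al) (Cg be) v = 0]) /\
      (forall al be ga v, inD D al -> inD D be -> inD D ga ->
         opcomm (Om al be) (Tg ga) v =
           (if al == ga then Tg be v else 0) - (if be == ga then Tg al v else 0)
         /\
         opcomm (Om al be) (Cg ga) v =
           (if al == ga then Cg be v else 0) - (if be == ga then Cg al v else 0)) /\
      (forall al be v, inD D al -> inD D be ->
         [/\ opcomm H (Tg al) v = Tg al v, opcomm H (Cg al) v = - Cg al v &
             opcomm (Tg al) (Cg be) v =
               2%:R *: ((if al == be then H v else 0) - Om al be v)]) /\
      (forall a1 b1 a2 b2 v, inD D a1 -> inD D b1 -> inD D a2 -> inD D b2 ->
         opcomm (Om a1 b1) (Om a2 b2) v =
           (if a1 == a2 then Om b1 b2 v else 0)
         + (if b1 == b2 then Om a1 a2 v else 0)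
         - (if a1 == b2 then Om b1 a2 v else 0)
         - (if b1 == a2 then Om a1 b2 v else 0)).

(* the operator by which a general element
   sum_al t_al T_al + h H + sum_{al,be} o_{al be} Om_{al be} + sum_al c_al C_al
   of c_D acts *)
Definition cD_elt (D : nat)
  (Tg : nat -> V -> V) (H : V -> V) (Om : nat -> nat -> V -> V)
  (Cg : nat -> V -> V)
  (t : nat -> C) (h : C) (o : nat -> nat -> C) (c : nat -> C) (v : V) : V :=
  \sum_(1 <= al < D.+1) t al *: Tg al v + h *: H v
  + \sum_(1 <= al < D.+1) \sum_(1 <= be < D.+1) o al be *: Om al be v
  + \sum_(1 <= al < D.+1) c al *: Cg al v.

Definition cD_local (ev od : V -> Prop) (Y : V -> int -> V -> V) (D : nat)
  Tg H Om Cg : Prop :=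
  forall t h o c, local_op ev od Y (cD_elt D Tg H Om Cg t h o c).

Definition cD_kills_vac (vac : V) (D : nat) Tg H Om Cg : Prop :=
  forall t h o c, cD_elt D Tg H Om Cg t h o c vac = 0.

(* the commutation relations of the theorem, coefficientwise:
   coefficient of x^n of both sides applied to b *)
Definition cD_comm_relations (Y : V -> int -> V -> V) (D : nat)
  (Tg : nat -> V -> V) (H : V -> V) (Om : nat -> nat -> V -> V)
  (Cg : nat -> V -> V) : Prop :=
  forall (a b : V) (n : int),
  [/\
      opcomm H (Y a n) b = Y (H a) n b + Y a n b *~ n,
      opcomm (Cg 1%N) (Y a n) b =
        Y (Cg 1%N a) n b - Y (H a) (n - 1) b *+ 2 - Y a (n - 1) b *~ (n - 1) &
      forall al be : nat, (2 <= al <= D)%N -> (2 <= be <= D)%N ->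
      [/\
          opcomm (Tg al) (Y a n) b = Y (Tg al a) n b,
          opcomm (Om al be) (Y a n) b = Y (Om al be a) n b,
          opcomm (Om 1%N al) (Y a n) b = Y (Om 1%N al a) n b + Y (Tg al a) (n - 1) b &
          opcomm (Cg al) (Y a n) b =
            Y (Cg al a) n b + Y (Om 1%N al a) (n - 1) b *+ 2 + Y (Tg al a) (n - 2) b]].

End Defs.

(* Goddard uniqueness: a field F(x) that is local with respect to every
   Y(b,x) and kills the vacuum vanishes, since (x - y)^N [F(x), Y(c,y)] 1 = 0
   recovers F(x) c.  Hence, for X in c_D local with X 1 = 0, [X, Y(a,x)] is
   determined by X Y(a,x) 1 = X e^(x T1) a, which obeys a first-order
   recursion in x driven by [X, T1]: this is 0 for T_al and Om_al,be, T1 for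
   H, T_al for Om_1al, 2 Om_1al for C_al and -2H for C_1, so solving in this
   order gives [X, Y(a,x)] = Y(Xa,x) + x Y(A1 a,x) + x^2 Y(A2 a,x), where
   x d/dx Y(a,x) = x Y(T1 a,x) comes out of the same argument for X = T1.
   Conversely such fields are local because shifts of local fields are, and
   at a = 1 they give X 1 = 0. *)

From mathcomp Require Import all_boot all_order all_algebra.
From mathcomp Require Import reals complex.
From mathcomp Require Import zify ring.
Set Implicit Arguments. Unset Strict Implicit. Unset Printing Implicit Defensive.
Import Order.TTheory GRing.Theory Num.Theory.
Local Open Scope ring_scope.

Section LinearOperators.
Context {R : realType} {V : lmodType R[i]}.
Implicit Types (f g : V -> V) (u v : V).

Lemma linopD f : linop f -> forall u v, f (u + v) = f u + f v.
Proof. by move=> lf u v; have := lf 1 u v; rewrite !scale1r. Qed.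

Lemma linop0 f : linop f -> f 0 = 0.
Proof. by move=> lf; apply: (addrI (f 0)); rewrite -linopD // !addr0. Qed.

Lemma linopZ f : linop f -> forall c u, f (c *: u) = c *: f u.
Proof. by move=> lf c u; rewrite -[c *: u]addr0 lf linop0 // addr0. Qed.

Lemma linopMn f : linop f -> forall u n, f (u *+ n) = f u *+ n.
Proof. by move=> lf u n; rewrite -scaler_nat linopZ // scaler_nat. Qed.

Lemma linopMz f : linop f -> forall u n, f (u *~ n) = f u *~ n.
Proof. by move=> lf u n; rewrite -scaler_int linopZ // scaler_int. Qed.

Lemma linop_scale f c : linop f -> linop (fun v => c *: f v).
Proof. by move=> lf d u v; rewrite lf scalerDr !scalerA mulrC. Qed.

Lemma linop_zero : linop (fun _ : V => 0).
Proof. by move=> c u v; rewrite scaler0 addr0. Qed.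

Lemma mulrSn_inj (u w : V) n : u *+ n.+1 = w *+ n.+1 -> u = w.
Proof.
rewrite -[u *+ _]scaler_nat -[w *+ _]scaler_nat => /scalerI; apply.
by rewrite pnatr_eq0.
Qed.

Lemma mulrz_regroup (w x y : V) (i : int) :
  w *~ (i + 1) + x *~ i + y *~ (i - 1) + (x + y *+ 2) = (w + x + y) *~ (i + 1).
Proof.
rewrite mulrzBr !mulrzDr !mulr1z !mulrzDl mulr2n !addrA.
by rewrite (ACl ((1*3*4*2*6*8)*(5*7))) /= addNr addr0.
Qed.

End LinearOperators.

Section Superspace.
Context {R : realType} {V : lmodType R[i]} {ev od : V -> Prop}.
Hypothesis SS : superspace ev od.

Lemma homog0 p : homog ev od p 0.
Proof. by case: SS => [[ev0 _] [od0 _] _ _]; case: p. Qed.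

Lemma homogZ p c v : homog ev od p v -> homog ev od p (c *: v).
Proof.
case: SS => [[ev0 evZ] [od0 odZ] _ _]; rewrite -[c *: v]addr0.
by case: p => /= hv; [apply: odZ | apply: evZ].
Qed.

Lemma even_op_scale f c : even_op ev od f -> even_op ev od (fun v => c *: f v).
Proof. by move=> ef p v /ef; apply: homogZ. Qed.

Lemma even_op_zero : even_op ev od (fun _ : V => 0).
Proof. by move=> p v _; apply: homog0. Qed.

Lemma eq_on_homog (f g : V -> V) :
  (forall u v, f (u + v) = f u + f v) -> (forall u v, g (u + v) = g u + g v) ->
  (forall p v, homog ev od p v -> f v = g v) -> forall v, f v = g v.
Proof.
move=> fD gD fg v; case: SS => _ _ /(_ v) [v0 [v1 [ev0 od1 ->]]] _.
by rewrite fD gD (fg false) // (fg true).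
Qed.

End Superspace.

Section Locality.
Context {R : realType} {V : lmodType R[i]}.
Implicit Types (F G : int -> int -> V).

Lemma eq_mulxyN N F G m k :
  (forall m k, F m k = G m k) -> mulxyN N F m k = mulxyN N G m k.
Proof. by move=> FG; apply: eq_bigr => j _; rewrite FG. Qed.

Lemma mulxyN_lin N c F G m k :
  mulxyN N (fun m k => c *: F m k + G m k) m k = c *: mulxyN N F m k + mulxyN N G m k.
Proof.
rewrite /mulxyN scaler_sumr -big_split; apply: eq_bigr => j _.
by rewrite scalerDr !scalerA mulrC.
Qed.

Lemma mulxyN_shift N F m k :
  mulxyN N (fun m k => F (m - 1) k) m k = mulxyN N F (m - 1) k.
Proof. by apply: eq_bigr => j _; rewrite addrAC. Qed.

(* [(x - y)^(N+1) = x (x - y)^N - y (x - y)^N] *)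
Lemma mulxyNS N F m k :
  mulxyN N.+1 F m k = mulxyN N F (m - 1) k - mulxyN N F m (k - 1).
Proof.
rewrite /mulxyN big_ord_recl [X in _ = X - _]big_ord_recl /=.
under eq_bigr => i _ do rewrite /bump /= binS natrD mulrDr scalerDl.
rewrite big_split /= big_ord_recr /= (bin_small (ltnSn N)) mulr0 scale0r !addr0.
rewrite -!addrA; congr (_ + _).
  by rewrite !bin0 !expr0 !mulr1; congr (_ *: F _ _); lia.
congr (_ + _).
  by apply: eq_bigr => i _; rewrite /bump /=; congr (_ *: F _ _); have := ltn_ord i; lia.
rewrite -sumrN; apply: eq_bigr => i _; rewrite exprS mulN1r mulNr scaleNr.
by congr (- (_ *: F _ _)); have := ltn_ord i; lia.
Qed.

(* Leibniz rule for [d/dx ((x - y)^(N+1) F)] *)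
Lemma mulxyN_deriv N F m k :
  mulxyN N.+1 (fun m k => F (m + 1) k *~ (m + 1)) m k =
  mulxyN N.+1 F (m + 1) k *~ (m + 1) - mulxyN N F m k *+ N.+1.
Proof.
rewrite /mulxyN big_ord_recr [X in _ = X *~ _ - _]big_ord_recr /=.
rewrite mulrzDl mulrz_suml -sumrMnl [RHS]addrAC -sumrB; congr (_ + _); last first.
  by rewrite subnn !subr0 scalerMzr.
apply: eq_bigr => i _ /=; have lt_iN := ltn_ord i.
have -> : m - (N.+1 - i)%N%:Z + 1 = m - (N - i)%N%:Z by lia.
have -> : m + 1 - (N.+1 - i)%N%:Z = m - (N - i)%N%:Z by lia.
set w := F _ _; set c := _ * _; set d := _ * _.
rewrite -[c *: (w *~ _)]scalerMzr !(scalerMzl c) -[(d *: w) *+ _]scaler_nat.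
rewrite scalerA -scalerBl; congr (_ *: _).
have binN := congr1 (fun n => n%:R : R[i]) (mul_bin_down N.+1 i).
rewrite /= !natrM natrB ?(ltnW lt_iN) // in binN.
rewrite -[c *~ (m - _)]mulrzr -[c *~ (m + 1)]mulrzr intrB intrD /=.
have -> : ((N - i)%N%:~R : R[i]) = (N - i)%:R by [].
rewrite natrB ?lt_iN // /c /d.
have -> : (N.+1%:R : R[i]) * ((-1) ^+ i * 'C(N, i)%:R) =
          (-1) ^+ i * (N.+1%:R * 'C(N, i)%:R) by ring.
by rewrite binN /=; ring.
Qed.

Lemma mulxyN_eq0_leq N M F :
  (N <= M)%N -> (forall m k, mulxyN N F m k = 0) -> forall m k, mulxyN M F m k = 0.
Proof.
move=> /subnKC <- F0; elim: (M - N)%N => [|d IH] m k; first by rewrite addn0.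
by rewrite addnS mulxyNS !IH subrr.
Qed.

End Locality.

Section VertexAlgebra.
Context {R : realType} {V : lmodType R[i]}.
Variables (ev od : V -> Prop) (vac : V) (Y : V -> int -> V -> V) (T1 : V -> V).
Hypothesis VA : vertex_algebra ev od vac Y T1.

Definition even_linear (f : V -> V) := linop f /\ even_op ev od f.

Definition local_field (p : bool) (F : int -> V -> V) : Prop :=
  forall q b, homog ev od q b -> exists N : nat, forall m k v,
    mulxyN N (fun m k => scomm_coef (psign R p q) F (Y b) m k v) m k = 0.

Definition Yquad (X A1 A2 : V -> V) (a : V) (n : int) (b : V) : V :=
  Y (X a) n b + Y (A1 a) (n - 1) b + Y (A2 a) (n - 2) b.

Definition Yquad_rel (X A1 A2 : V -> V) : Prop :=
  forall a n b, opcomm X (Y a n) b = Yquad X A1 A2 a n b.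

Lemma VA_superspace : superspace ev od.
Proof. by case: VA. Qed.

Lemma Ylinear_l n b : linop (fun a => Y a n b).
Proof. by case: VA => _ [_ [YL _]] c u v; apply: YL. Qed.

Lemma Ylinear a n : linop (Y a n).
Proof. by case: VA => _ [_ [_ [Yl _]]]. Qed.

Lemma T1_even_linear : even_linear T1.
Proof. by case: VA => _ [_ [_ [_ [_ [_ [[T1l [T1e _]] _]]]]]]. Qed.

Lemma T1_vac : T1 vac = 0.
Proof. by case: VA => _ [_ [_ [_ [_ [_ [[_ [_ T1v]] _]]]]]]. Qed.

Lemma Y_vac n b : Y vac n b = if n == 0 then b else 0.
Proof. by case: VA => _ [_ [_ [_ [_ [_ [_ [Yv _]]]]]]]. Qed.

Lemma Y_neg_vac a n : n < 0 -> Y a n vac = 0.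
Proof. by case: VA => _ [_ [_ [_ [_ [_ [_ [_ [Yn _]]]]]]]]; apply: Yn. Qed.

Lemma Y0_vac a : Y a 0 vac = a.
Proof. by case: VA => _ [_ [_ [_ [_ [_ [_ [_ [_ [Y0 _]]]]]]]]]. Qed.

Lemma opcomm_T1_Y a n b : opcomm T1 (Y a n) b = Y a (n + 1) b *~ (n + 1).
Proof. by case: VA => _ [_ [_ [_ [_ [_ [_ [_ [_ [_ [T1d _]]]]]]]]]]. Qed.

Lemma local_field_Y p a : homog ev od p a -> local_field p (Y a).
Proof.
by case: VA => _ [_ [_ [_ [_ [_ [_ [_ [_ [_ [_ Yloc]]]]]]]]]] pa q b; apply: Yloc.
Qed.

Lemma even_linear0 : even_linear (fun _ => 0).
Proof. by split; [apply: linop_zero | apply: even_op_zero VA_superspace]. Qed.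

Lemma even_linear_scale c f : even_linear f -> even_linear (fun v => c *: f v).
Proof.
by case=> lf ef; split; [exact: linop_scale c lf | exact (even_op_scale VA_superspace c ef)].
Qed.

Lemma Y0l n b : Y 0 n b = 0.
Proof. exact: linop0 (Ylinear_l n b). Qed.

Lemma YZl c a n b : Y (c *: a) n b = c *: Y a n b.
Proof. exact: linopZ (Ylinear_l n b) c a. Qed.

Lemma T1_Y_vac a n : T1 (Y a n vac) = Y a (n + 1) vac *~ (n + 1).
Proof. by rewrite -opcomm_T1_Y /opcomm T1_vac (linop0 (Ylinear _ _)) subr0. Qed.

Lemma opcomm_vac X a n : X vac = 0 -> opcomm X (Y a n) vac = X (Y a n vac).
Proof. by move=> Xvac; rewrite /opcomm Xvac (linop0 (Ylinear _ _)) subr0. Qed.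

Lemma eq_local_field p F G :
  (forall m v, F m v = G m v) -> local_field p F -> local_field p G.
Proof.
move=> FG locF q b qb; have [N FN] := locF q b qb; exists N => m k v.
by rewrite -(FN m k v); apply: eq_mulxyN => m' k'; rewrite /scomm_coef !FG.
Qed.

Lemma local_field_lin p c F G : local_field p F -> local_field p G ->
  local_field p (fun m v => c *: F m v + G m v).
Proof.
move=> locF locG q b qb; have [N1 F0] := locF q b qb; have [N2 G0] := locG q b qb.
exists (N1 + N2)%N => m k v.
rewrite (@eq_mulxyN _ _ _ _ (fun m k =>
  c *: scomm_coef (psign R p q) F (Y b) m k v + scomm_coef (psign R p q) G (Y b) m k v)).
  rewrite mulxyN_lin (mulxyN_eq0_leq (leq_addr _ _) (fun m k => F0 m k v)).
  by rewrite (mulxyN_eq0_leq (leq_addl _ _) (fun m k => G0 m k v)) scaler0 addr0.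
move=> m' k'; rewrite /scomm_coef (linopD (Ylinear _ _)) (linopZ (Ylinear _ _)).
by rewrite scalerDr !scalerBr !scalerA (mulrC _ c) opprD addrACA.
Qed.

Lemma local_field0 p : local_field p (fun _ _ => 0).
Proof.
move=> q b _; exists 0%N => m k v; rewrite /mulxyN big1 // => j _.
by rewrite /scomm_coef (linop0 (Ylinear _ _)) scaler0 subrr scaler0.
Qed.

Lemma local_fieldD p F G : local_field p F -> local_field p G ->
  local_field p (fun m v => F m v + G m v).
Proof.
move=> locF locG; apply: (eq_local_field _ (local_field_lin 1 locF locG)).
by move=> m v; rewrite scale1r.
Qed.

Lemma local_fieldB p F G : local_field p F -> local_field p G ->
  local_field p (fun m v => F m v - G m v).
Proof.
move=> locF locG; apply: (eq_local_field _ (local_field_lin (-1) locG locF)).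
by move=> m v; rewrite scaleN1r addrC.
Qed.

Lemma local_field_shift p F : local_field p F -> local_field p (fun m => F (m - 1)).
Proof.
move=> locF q b qb; have [N FN] := locF q b qb; exists N => m k v.
by rewrite (mulxyN_shift N (fun m k => scomm_coef (psign R p q) F (Y b) m k v)).
Qed.

Lemma local_field_deriv p F : local_field p F ->
  local_field p (fun m v => F (m + 1) v *~ (m + 1)).
Proof.
move=> locF q b qb; have [N FN] := locF q b qb; exists N.+1 => m k v.
rewrite (@eq_mulxyN _ _ _ _ (fun m k =>
  scomm_coef (psign R p q) F (Y b) (m + 1) k v *~ (m + 1))); last first.
  by move=> m' k'; rewrite /scomm_coef (linopMz (Ylinear _ _)) mulrzBl scalerMzr.
rewrite (mulxyN_deriv N (fun m k => scomm_coef (psign R p q) F (Y b) m k v)) FN.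
by rewrite (mulxyN_eq0_leq (leqnSn N) (fun m k => FN m k v)) mul0rz mul0rn subr0.
Qed.

(* Goddard uniqueness: the coefficient of [x^(m+N) y^0] of
   [(x - y)^N [F(x), Y(c, y)]] applied to the vacuum is [F m c]. *)
Lemma local_field_vac_eq0 p F :
  (forall m u v, F m (u + v) = F m u + F m v) -> (forall m, F m vac = 0) ->
  local_field p F -> forall m b, F m b = 0.
Proof.
move=> FD Fvac locF m.
have F0 m' : F m' 0 = 0 by apply: (addrI (F m' 0)); rewrite -FD !addr0.
apply: (eq_on_homog VA_superspace (FD m) (fun u v => esym (addr0 0))) => q c qc.
have [N FN] := locF q c qc; have := FN (m + N%:Z) 0 vac.
rewrite /mulxyN big_ord_recl big1 ?addr0 => [|i _].
  rewrite /scomm_coef Fvac (linop0 (Ylinear _ _)) scaler0 subr0 subn0 expr0.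
  by rewrite bin0 mul1r scale1r addrK Y0_vac.
by rewrite /scomm_coef Fvac (linop0 (Ylinear _ _)) scaler0 subr0 Y_neg_vac ?F0 ?scaler0.
Qed.

Lemma local_opP X : local_op ev od Y X <->
  forall p a, homog ev od p a -> local_field p (fun m => opcomm X (Y a m)).
Proof. by split=> locX p a pa => [q b | q b qb]; apply: locX. Qed.

Lemma eq_local_op X X' : (forall v, X v = X' v) ->
  local_op ev od Y X -> local_op ev od Y X'.
Proof.
move=> XX' /local_opP locX; apply/local_opP => p a pa.
by apply: (eq_local_field _ (locX p a pa)) => m v; rewrite /opcomm !XX'.
Qed.

Lemma local_op_lin c X X' : local_op ev od Y X -> local_op ev od Y X' ->
  local_op ev od Y (fun v => c *: X v + X' v).
Proof.
move=> /local_opP locX /local_opP locX'; apply/local_opP => p a pa.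
apply: (eq_local_field _ (local_field_lin c (locX p a pa) (locX' p a pa))) => m v.
rewrite /opcomm (linopD (Ylinear _ _)) (linopZ (Ylinear _ _)) scalerBr.
by rewrite opprD addrACA.
Qed.

Lemma local_op_zero : local_op ev od Y (fun _ => 0).
Proof.
apply/local_opP => p a _; apply: eq_local_field (local_field0 p) => m v.
by rewrite /opcomm (linop0 (Ylinear _ _)) subrr.
Qed.

Lemma Yquad_local X A1 A2 p a :
  even_op ev od X -> even_op ev od A1 -> even_op ev od A2 -> homog ev od p a ->
  local_field p (Yquad X A1 A2 a).
Proof.
move=> eX eA1 eA2 pa.
have sh2 F : local_field p F -> local_field p (fun m => F (m - 2)).
  move=> /local_field_shift /local_field_shift; apply: eq_local_field => m v.
  by congr F; lia.
apply: local_fieldD; first apply: local_fieldD.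
- exact/local_field_Y/eX.
- exact/local_field_shift/local_field_Y/eA1.
- exact/sh2/local_field_Y/eA2.
Qed.

Lemma Yquad_rel_vac X A1 A2 : Yquad_rel X A1 A2 -> X vac = 0.
Proof.
move/(_ vac 0 vac); rewrite /opcomm /Yquad !Y0_vac !Y_neg_vac // Y_vac eqxx.
by rewrite !addr0 subrr => /esym.
Qed.

Lemma Yquad_rel_at_vac X A1 A2 : Yquad_rel X A1 A2 ->
  forall a n, X (Y a n vac) = Yquad X A1 A2 a n vac.
Proof. by move=> rX a n; rewrite -opcomm_vac ?rX //; apply: Yquad_rel_vac rX. Qed.

Lemma Yquad_rel_local X A1 A2 :
  even_op ev od X -> even_op ev od A1 -> even_op ev od A2 ->
  Yquad_rel X A1 A2 -> local_op ev od Y X.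
Proof.
move=> eX eA1 eA2 rX; apply/local_opP => p a pa.
by apply: eq_local_field (Yquad_local eX eA1 eA2 pa) => m v; rewrite rX.
Qed.

(* [X e^(x T1) a] is determined by [X a] and the recursion [X T1 = T1 X + [X, T1]]. *)
Lemma Yquad_vac X A1 A2 B : linop X -> (forall v, opcomm X T1 v = B v) ->
  (forall a n, B (Y a n vac) = Y (A1 a) n vac + Y (A2 a) (n - 1) vac *+ 2) ->
  forall a n, X (Y a n vac) = Yquad X A1 A2 a n vac.
Proof.
move=> lX XT1 Bvac a [k|k]; last first.
  by rewrite /Yquad !Y_neg_vac ?(linop0 lX) ?addr0 //; lia.
elim: k => [|k IH]; first by rewrite /Yquad !Y0_vac !Y_neg_vac // !addr0.
apply: (@mulrSn_inj _ _ _ _ k); rewrite -(linopMn lX) !pmulrn.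
have -> : k.+1%:Z = k + 1 by lia.
rewrite -(T1_Y_vac a k) -[X (T1 _)](subrK (T1 (X (Y a k vac)))).
rewrite -/(opcomm X T1 (Y a k vac)) XT1 IH Bvac addrC.
have [lT1 _] := T1_even_linear.
rewrite /Yquad !(linopD lT1) !T1_Y_vac.
have -> : k%:Z + 1 - 1 = k by lia.
have -> : k%:Z + 1 - 2 = k%:Z - 1 by lia.
have -> : k%:Z - 1 + 1 = k by lia.
have -> : k%:Z - 2 + 1 = k%:Z - 1 by lia.
exact: mulrz_regroup.
Qed.

Lemma Yquad_rel_of_local X A1 A2 :
  even_linear X -> even_linear A1 -> even_linear A2 -> X vac = 0 ->
  (forall p a, homog ev od p a -> local_field p (fun m => opcomm X (Y a m))) ->
  (forall a n, X (Y a n vac) = Yquad X A1 A2 a n vac) -> Yquad_rel X A1 A2.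
Proof.
move=> [lX eX] [lA1 eA1] [lA2 eA2] Xvac locX XYvac a n b.
have YlD c m u v : Y (u + v) m c = Y u m c + Y v m c := linopD (Ylinear_l m c) u v.
move: a; apply: (eq_on_homog VA_superspace) => [u v|u v|p a pa].
- by rewrite /opcomm YlD (linopD lX) YlD opprD addrACA.
- by rewrite /Yquad (linopD lX) (linopD lA1) (linopD lA2) !YlD !addrA (ACl (1*3*5*2*4*6)).
apply: subr0_eq; move: n b.
have opD m u v : opcomm X (Y a m) (u + v) = opcomm X (Y a m) u + opcomm X (Y a m) v.
  by rewrite /opcomm (linopD (Ylinear a m)) !(linopD lX) (linopD (Ylinear a m)) opprD addrACA.
have YqD m u v : Yquad X A1 A2 a m (u + v) = Yquad X A1 A2 a m u + Yquad X A1 A2 a m v.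
  by rewrite /Yquad !(linopD (Ylinear _ _)) !addrA (ACl (1*3*5*2*4*6)).
apply: (local_field_vac_eq0 _ _ (local_fieldB (locX p a pa) (Yquad_local eX eA1 eA2 pa))).
  by move=> m u v; rewrite opD YqD opprD addrACA.
by move=> m; rewrite opcomm_vac // XYvac subrr.
Qed.

Lemma Yquad_rel_T1 : Yquad_rel T1 (fun _ => 0) (fun _ => 0).
Proof.
have [lT1 eT1] := T1_even_linear.
apply: Yquad_rel_of_local => //; try exact: even_linear0; first exact: T1_vac.
  move=> p a pa; apply: eq_local_field (local_field_deriv (local_field_Y pa)).
  by move=> m v; rewrite opcomm_T1_Y.
apply: (Yquad_vac (B := fun _ => 0)) => // [v|a n]; first by rewrite /opcomm subrr.
by rewrite !Y0l mul0rn addr0.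
Qed.

Lemma Yquad00 X a n b : Yquad X (fun _ => 0) (fun _ => 0) a n b = Y (X a) n b.
Proof. by rewrite /Yquad !Y0l !addr0. Qed.

Lemma Y_T1 a n b : Y (T1 a) n b = Y a (n + 1) b *~ (n + 1).
Proof. by rewrite -Yquad00 -Yquad_rel_T1 opcomm_T1_Y. Qed.

Lemma Yquad_T1_0 X a n b :
  Yquad X T1 (fun _ => 0) a n b = Y (X a) n b + Y a n b *~ n.
Proof. by rewrite /Yquad Y0l addr0 Y_T1 subrK. Qed.

Lemma Yquad_0 X A a n b :
  Yquad X A (fun _ => 0) a n b = Y (X a) n b + Y (A a) (n - 1) b.
Proof. by rewrite /Yquad Y0l addr0. Qed.

Lemma Yquad_2 X A B a n b :
  Yquad X (fun v => 2%:R *: A v) B a n b =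
  Y (X a) n b + Y (A a) (n - 1) b *+ 2 + Y (B a) (n - 2) b.
Proof. by rewrite /Yquad YZl scaler_nat. Qed.

Lemma Yquad_N2_N1 X A a n b :
  Yquad X (fun v => - 2%:R *: A v) (fun v => - 1 *: T1 v) a n b =
  Y (X a) n b - Y (A a) (n - 1) b *+ 2 - Y a (n - 1) b *~ (n - 1).
Proof.
rewrite /Yquad !YZl scaleNr scaler_nat scaleN1r Y_T1.
by have -> : n - 2 + 1 = n - 1 by lia.
Qed.

End VertexAlgebra.

Section ElementInduction.
Context {R : realType} {V : lmodType R[i]}.
Variables (D : nat) (Tg : nat -> V -> V) (H : V -> V) (Om : nat -> nat -> V -> V)
  (Cg : nat -> V -> V) (P : (V -> V) -> Prop).
Hypotheses (P_ext : forall X X', (forall v, X v = X' v) -> P X -> P X')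
  (P0 : P (fun _ => 0))
  (P_lin : forall c X X', P X -> P X' -> P (fun v => c *: X v + X' v)).

Let P_add X X' : P X -> P X' -> P (fun v => X v + X' v).
Proof. by move=> PX PX'; apply: P_ext (P_lin 1 PX PX') => v; rewrite scale1r. Qed.

Let P_scale c X : P X -> P (fun v => c *: X v).
Proof. by move=> PX; apply: P_ext (P_lin c PX P0) => v; rewrite addr0. Qed.

Let P_sum (F : nat -> V -> V) : (forall al, inD D al -> P (F al)) ->
  P (fun v => \sum_(1 <= al < D.+1) F al v).
Proof.
move=> PF; have : forall al, al \in index_iota 1 D.+1 -> P (F al).
  by move=> al; rewrite mem_index_iota => al_D; apply: PF; rewrite /inD; lia.
elim: (index_iota 1 D.+1) => [|al r IH] Pr.
  by apply: P_ext P0 => v; rewrite big_nil.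
apply: P_ext (P_add (Pr al (mem_head _ _)) (IH _)) => [v|al' al'r].
  by rewrite big_cons.
by apply: Pr; rewrite inE al'r orbT.
Qed.

Lemma cD_elt_ind :
  (forall al, inD D al -> P (Tg al)) -> P H ->
  (forall al be, inD D al -> inD D be -> P (Om al be)) ->
  (forall al, inD D al -> P (Cg al)) ->
  forall t h o c, P (cD_elt D Tg H Om Cg t h o c).
Proof.
move=> PT PH PO PC t h o c; apply: P_add; first apply: P_add; first apply: P_add.
- by apply: P_sum => al /PT; apply: P_scale.
- exact: P_scale.
- by apply: P_sum => al al_D; apply: P_sum => be /(PO _ _ al_D); apply: P_scale.
- by apply: P_sum => al /PC; apply: P_scale.
Qed.

End ElementInduction.

Section CDAction.
Context {R : realType} {V : lmodType R[i]}.
Variables (ev od : V -> Prop) (vac : V) (Y : V -> int -> V -> V) (T1 : V -> V).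
Variables (D : nat) (Tg : nat -> V -> V) (H : V -> V) (Om : nat -> nat -> V -> V)
  (Cg : nat -> V -> V).
Hypotheses (VA : vertex_algebra ev od vac Y T1) (CA : cD_action ev od D Tg H Om Cg)
  (T1E : forall v, Tg 1%N v = T1 v) (D_gt0 : (0 < D)%N).

Local Notation even_linear := (even_linear ev od).
Local Notation Yquad_rel := (Yquad_rel Y).

Lemma inD1 : inD D 1.
Proof. by rewrite /inD D_gt0. Qed.

Lemma inD_ge2 al : (2 <= al <= D)%N -> inD D al.
Proof. by rewrite /inD; lia. Qed.

Lemma inDP al : inD D al -> al = 1%N \/ (2 <= al <= D)%N.
Proof. by rewrite /inD; case: (al =P 1%N) => [|ne1]; [left | right; lia]. Qed.

Lemma Tg_even_linear al : inD D al -> even_linear (Tg al).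
Proof. by case: CA => TL _ /TL. Qed.

Lemma H_even_linear : even_linear H.
Proof. by case: CA => _ []. Qed.

Lemma Om_even_linear al be : inD D al -> inD D be -> even_linear (Om al be).
Proof. by case: CA => _ [_ [OL _]]; apply: OL. Qed.

Lemma Cg_even_linear al : inD D al -> even_linear (Cg al).
Proof. by case: CA => _ [_ [_ [CL _]]] /CL. Qed.

Lemma Om_antisym al be v : inD D al -> inD D be -> Om al be v = - Om be al v.
Proof. by case: CA => _ [_ [_ [_ [OC _]]]]; apply: OC. Qed.

Lemma Om11 v : Om 1%N 1%N v = 0.
Proof.
apply: (@mulrSn_inj _ _ _ _ 1); rewrite mul0rn mulr2n {1}Om_antisym ?inD1 //.
exact: addNr.
Qed.

Lemma opcomm_Tg_T1 al v : inD D al -> opcomm (Tg al) T1 v = 0.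
Proof.
case: CA => _ [_ [_ [_ [_ [TT _]]]]] al_D; have [_ + _] := TT al 1%N v al_D inD1.
by rewrite /opcomm !T1E.
Qed.

Lemma opcomm_H_T1 v : opcomm H T1 v = T1 v.
Proof.
case: CA => _ [_ [_ [_ [_ [_ [_ [HTC _]]]]]]].
by have [+ _ _] := HTC 1%N 1%N v inD1 inD1; rewrite /opcomm !T1E.
Qed.

Lemma opcomm_Om_T1 al be v : inD D al -> inD D be ->
  opcomm (Om al be) T1 v =
    (if al == 1%N then Tg be v else 0) - (if be == 1%N then Tg al v else 0).
Proof.
case: CA => _ [_ [_ [_ [_ [_ [OTC _]]]]]] al_D be_D.
by have [+ _] := OTC al be 1%N v al_D be_D inD1; rewrite /opcomm !T1E.
Qed.

Lemma opcomm_Cg_T1 al v : inD D al ->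
  opcomm (Cg al) T1 v = - 2%:R *: ((if al == 1%N then H v else 0) - Om 1%N al v).
Proof.
case: CA => _ [_ [_ [_ [_ [_ [_ [HTC _]]]]]]] al_D.
have [_ _] := HTC 1%N al v inD1 al_D; rewrite eq_sym /opcomm !T1E => TC.
by rewrite scaleNr -TC opprB.
Qed.

Definition cD_operator (X : V -> V) :=
  exists t h o c, forall v, cD_elt D Tg H Om Cg t h o c v = X v.

Lemma sum_delta al (f : nat -> V) : inD D al ->
  \sum_(1 <= i < D.+1) ((i == al)%:R : R[i]) *: f i = f al.
Proof.
move=> al_D; rewrite (bigD1_seq al) ?iota_uniq //=; last first.
  by rewrite mem_index_iota; move: al_D; rewrite /inD; lia.
by rewrite eqxx scale1r big1 ?addr0 // => i /negbTE ->; rewrite scale0r.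
Qed.

Lemma sum_scale0 (f : nat -> V) : \sum_(1 <= i < D.+1) (0 : R[i]) *: f i = 0.
Proof. by rewrite big1 // => i _; rewrite scale0r. Qed.

Lemma cD_operator_Tg al : inD D al -> cD_operator (Tg al).
Proof.
exists (fun i => (i == al)%:R), 0, (fun _ _ => 0), (fun _ => 0) => v.
by rewrite /cD_elt /= sum_delta // scale0r big1 ?sum_scale0 ?addr0 // => *; rewrite sum_scale0.
Qed.

Lemma cD_operator_H : cD_operator H.
Proof.
exists (fun _ => 0), 1, (fun _ _ => 0), (fun _ => 0) => v.
rewrite /cD_elt /= !sum_scale0 scale1r big1 => [|*]; last exact: sum_scale0.
by rewrite add0r !addr0.
Qed.

Lemma cD_operator_Om al be : inD D al -> inD D be -> cD_operator (Om al be).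
Proof.
move=> al_D be_D.
exists (fun _ => 0), 0, (fun i j => ((i == al) && (j == be))%:R), (fun _ => 0) => v.
rewrite /cD_elt /= !sum_scale0 scale0r !add0r addr0.
rewrite (eq_bigr (fun i => (i == al)%:R *: Om i be v)).
  exact: (sum_delta (fun i => Om i be v)).
move=> i _; case: (i == al); last by rewrite sum_scale0 scale0r.
by rewrite scale1r (sum_delta (fun j => Om i j v)).
Qed.

Lemma cD_operator_Cg al : inD D al -> cD_operator (Cg al).
Proof.
exists (fun _ => 0), 0, (fun _ _ => 0), (fun i => (i == al)%:R) => v.
by rewrite /cD_elt /= sum_delta // scale0r sum_scale0 big1 ?add0r // => *; rewrite sum_scale0.
Qed.

(* The relations of the theorem, with [x d/dx Y(a,x)] written as [x Y(T1 a, x)]. *)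
Definition quad_relations :=
  [/\ Yquad_rel H T1 (fun _ => 0),
      Yquad_rel (Cg 1%N) (fun v => - 2%:R *: H v) (fun v => - 1 *: T1 v) &
      forall al be, (2 <= al <= D)%N -> (2 <= be <= D)%N ->
      [/\ Yquad_rel (Tg al) (fun _ => 0) (fun _ => 0),
          Yquad_rel (Om al be) (fun _ => 0) (fun _ => 0),
          Yquad_rel (Om 1%N al) (Tg al) (fun _ => 0) &
          Yquad_rel (Cg al) (fun v => 2%:R *: Om 1%N al v) (Tg al)]].

Lemma cD_comm_relationsE : cD_comm_relations Y D Tg H Om Cg <-> quad_relations.
Proof.
rewrite /quad_relations /Yquad_rel; split=> [rel | [rH rC1 rel] a b n].
  split=> [a n b | a n b | al be al_D be_D].
  - by rewrite (Yquad_T1_0 VA) //; case: (rel a b n).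
  - by rewrite (Yquad_N2_N1 VA) //; case: (rel a b n).
  by split=> a n b; rewrite ?(Yquad00 VA) ?(Yquad_0 VA) ?(Yquad_2 VA) //;
    case: (rel a b n) => _ _ /(_ al be al_D be_D) [].
split; first by rewrite rH (Yquad_T1_0 VA).
  by rewrite rC1 (Yquad_N2_N1 VA).
move=> al be al_D be_D; have [rT rO rO1 rC] := rel al be al_D be_D.
by split; rewrite ?rT ?rO ?rO1 ?rC ?(Yquad00 VA) ?(Yquad_0 VA) ?(Yquad_2 VA).
Qed.

Section Forward.
Hypotheses (LOC : cD_local ev od Y D Tg H Om Cg) (KV : cD_kills_vac vac D Tg H Om Cg).

Lemma Yquad_rel_of_cD_operator X A1 A2 B :
  cD_operator X -> even_linear X -> even_linear A1 -> even_linear A2 ->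
  (forall v, opcomm X T1 v = B v) ->
  (forall a n, B (Y a n vac) = Y (A1 a) n vac + Y (A2 a) (n - 1) vac *+ 2) ->
  Yquad_rel X A1 A2.
Proof.
move=> [t [h [o [c Xe]]]] eX eA1 eA2 XT1 Bvac.
apply: (Yquad_rel_of_local VA) => //; first by rewrite -Xe KV.
  by apply/local_opP; apply: eq_local_op (LOC t h o c).
by case: eX => lX _; exact (Yquad_vac VA lX XT1 Bvac).
Qed.

Lemma Yquad_rel_Tg al : (2 <= al <= D)%N -> Yquad_rel (Tg al) (fun _ => 0) (fun _ => 0).
Proof.
move=> /inD_ge2 al_D; apply: (Yquad_rel_of_cD_operator (B := fun _ => 0)).
- exact: cD_operator_Tg.
- exact: Tg_even_linear.
- exact: even_linear0 VA.
- exact: even_linear0 VA.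
- by move=> v; rewrite opcomm_Tg_T1.
- by move=> a n; rewrite !(Y0l VA) mul0rn addr0.
Qed.

Lemma Yquad_rel_Om al be : (2 <= al <= D)%N -> (2 <= be <= D)%N ->
  Yquad_rel (Om al be) (fun _ => 0) (fun _ => 0).
Proof.
move=> al2 be2; have [al_D be_D] := (inD_ge2 al2, inD_ge2 be2).
apply: (Yquad_rel_of_cD_operator (B := fun _ => 0)).
- exact: cD_operator_Om.
- exact: Om_even_linear.
- exact: even_linear0 VA.
- exact: even_linear0 VA.
- by move=> v; rewrite opcomm_Om_T1 // !ifN ?subr0 //; apply/eqP; lia.
- by move=> a n; rewrite !(Y0l VA) mul0rn addr0.
Qed.

Lemma Yquad_rel_H : Yquad_rel H T1 (fun _ => 0).
Proof.
apply: (Yquad_rel_of_cD_operator (B := T1)).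
- exact: cD_operator_H.
- exact: H_even_linear.
- exact: T1_even_linear VA.
- exact: even_linear0 VA.
- exact: opcomm_H_T1.
- move=> a n; rewrite (Yquad_rel_at_vac VA (Yquad_rel_T1 VA)) (Yquad00 VA).
  by rewrite (Y0l VA) mul0rn addr0.
Qed.

Lemma Yquad_rel_Om1 al : (2 <= al <= D)%N -> Yquad_rel (Om 1%N al) (Tg al) (fun _ => 0).
Proof.
move=> al2; have al_D := inD_ge2 al2.
apply: (Yquad_rel_of_cD_operator (B := Tg al)).
- exact: cD_operator_Om inD1 al_D.
- exact: Om_even_linear inD1 al_D.
- exact: Tg_even_linear.
- exact: even_linear0 VA.
- by move=> v; rewrite opcomm_Om_T1 ?inD1 // eqxx ifN ?subr0 //; apply/eqP; lia.
- move=> a n; rewrite (Yquad_rel_at_vac VA (Yquad_rel_Tg al2)).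
  by rewrite (Yquad00 VA) (Y0l VA) mul0rn addr0.
Qed.

Lemma Yquad_rel_Cg al : (2 <= al <= D)%N ->
  Yquad_rel (Cg al) (fun v => 2%:R *: Om 1%N al v) (Tg al).
Proof.
move=> al2; have al_D := inD_ge2 al2.
apply: (Yquad_rel_of_cD_operator (B := fun v => 2%:R *: Om 1%N al v)).
- exact: cD_operator_Cg.
- exact: Cg_even_linear.
- exact/(even_linear_scale VA)/Om_even_linear/al_D/inD1.
- exact: Tg_even_linear.
- move=> v; rewrite opcomm_Cg_T1 // ifN ?sub0r ?scaleNr ?scalerN ?opprK //.
  by apply/eqP; lia.
- move=> a n; rewrite (Yquad_rel_at_vac VA (Yquad_rel_Om1 al2)) (Yquad_0 VA).
  by rewrite (YZl VA) scalerDr !scaler_nat.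
Qed.

Lemma Yquad_rel_C1 :
  Yquad_rel (Cg 1%N) (fun v => - 2%:R *: H v) (fun v => - 1 *: T1 v).
Proof.
apply: (Yquad_rel_of_cD_operator (B := fun v => - 2%:R *: H v)).
- exact: cD_operator_Cg inD1.
- exact: Cg_even_linear inD1.
- exact/(even_linear_scale VA)/H_even_linear.
- exact/(even_linear_scale VA)/(T1_even_linear VA).
- by move=> v; rewrite opcomm_Cg_T1 ?inD1 // eqxx Om11 subr0.
- move=> a n; rewrite (Yquad_rel_at_vac VA Yquad_rel_H) (Yquad_T1_0 VA).
  by rewrite !(YZl VA) (Y_T1 VA) subrK scalerDr scalerMnl mulNrn.
Qed.

Lemma quad_relations_of_local : quad_relations.
Proof.
split; [exact: Yquad_rel_H | exact: Yquad_rel_C1 | move=> al be al2 be2].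
by split; [apply: Yquad_rel_Tg | apply: Yquad_rel_Om | apply: Yquad_rel_Om1 | apply: Yquad_rel_Cg].
Qed.

End Forward.

Definition local_vac_op X := local_op ev od Y X /\ X vac = 0.

Lemma local_vac_op_of_Yquad_rel X A1 A2 :
  even_op ev od X -> even_op ev od A1 -> even_op ev od A2 ->
  Yquad_rel X A1 A2 -> local_vac_op X.
Proof.
move=> eX eA1 eA2 rX.
by split; [exact (Yquad_rel_local VA eX eA1 eA2 rX) | exact (Yquad_rel_vac VA rX)].
Qed.

Lemma eq_local_vac_op X X' : (forall v, X v = X' v) -> local_vac_op X -> local_vac_op X'.
Proof. by move=> XX' [locX Xvac]; split; [apply: eq_local_op locX | rewrite -XX']. Qed.

Lemma local_vac_op0 : local_vac_op (fun _ => 0).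
Proof. by split; [apply: local_op_zero VA|]. Qed.

Lemma local_vac_op_lin c X X' : local_vac_op X -> local_vac_op X' ->
  local_vac_op (fun v => c *: X v + X' v).
Proof.
move=> [locX Xvac] [locX' X'vac]; split; first exact (local_op_lin VA c locX locX').
by rewrite Xvac X'vac scaler0 addr0.
Qed.

Section Backward.
Hypothesis REL : quad_relations.

Let evT al : inD D al -> even_op ev od (Tg al). Proof. by move/Tg_even_linear => []. Qed.
Let evO al be : inD D al -> inD D be -> even_op ev od (Om al be).
Proof. by move=> al_D /(Om_even_linear al_D) []. Qed.
Let evC al : inD D al -> even_op ev od (Cg al). Proof. by move/Cg_even_linear => []. Qed.
Let ev0 := (even_linear0 VA).2.

Lemma local_vac_Tg al : inD D al -> local_vac_op (Tg al).
Proof.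
case/inDP => [->|al2].
  apply: eq_local_vac_op (fun v => esym (T1E v)) _.
  exact: local_vac_op_of_Yquad_rel (T1_even_linear VA).2 ev0 ev0 (Yquad_rel_T1 VA).
have [_ _ /(_ al al al2 al2) [rT _ _ _]] := REL.
exact: local_vac_op_of_Yquad_rel (evT (inD_ge2 al2)) ev0 ev0 rT.
Qed.

Lemma local_vac_H : local_vac_op H.
Proof.
have [rH _ _] := REL.
exact: local_vac_op_of_Yquad_rel H_even_linear.2 (T1_even_linear VA).2 ev0 rH.
Qed.

Lemma local_vac_Om1 al : (2 <= al <= D)%N -> local_vac_op (Om 1%N al).
Proof.
move=> al2; have [_ _ /(_ al al al2 al2) [_ _ rO1 _]] := REL.
exact: local_vac_op_of_Yquad_rel (evO inD1 (inD_ge2 al2)) (evT (inD_ge2 al2)) ev0 rO1.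
Qed.

Lemma local_vac_Om al be : inD D al -> inD D be -> local_vac_op (Om al be).
Proof.
move=> al_D be_D; case/inDP: (al_D) => [->|al2]; case/inDP: (be_D) => [->|be2].
- by apply: eq_local_vac_op local_vac_op0 => v; rewrite Om11.
- exact: local_vac_Om1.
- apply: eq_local_vac_op (local_vac_op_lin (-1) (local_vac_Om1 al2) local_vac_op0) => v.
  by rewrite addr0 scaleN1r -Om_antisym ?inD1.
- have [_ _ /(_ al be al2 be2) [_ rO _ _]] := REL.
  exact: local_vac_op_of_Yquad_rel (evO al_D be_D) ev0 ev0 rO.
Qed.

Lemma local_vac_Cg al : inD D al -> local_vac_op (Cg al).
Proof.
case/inDP => [->|al2].
  have [_ rC1 _] := REL.
  apply: local_vac_op_of_Yquad_rel (evC inD1) _ _ rC1.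
  - exact: (even_linear_scale VA _ H_even_linear).2.
  - exact: (even_linear_scale VA _ (T1_even_linear VA)).2.
have [_ _ /(_ al al al2 al2) [_ _ _ rC]] := REL; have al_D := inD_ge2 al2.
apply: local_vac_op_of_Yquad_rel (evC al_D) _ (evT al_D) rC.
exact: (even_linear_scale VA _ (Om_even_linear inD1 al_D)).2.
Qed.

Lemma cD_local_vac t h o c : local_vac_op (cD_elt D Tg H Om Cg t h o c).
Proof.
apply: cD_elt_ind; [exact: eq_local_vac_op | exact: local_vac_op0 |
  exact: local_vac_op_lin | exact: local_vac_Tg | exact: local_vac_H |
  exact: local_vac_Om | exact: local_vac_Cg].
Qed.

End Backward.

End CDAction.

Theorem mainTheorem3 (R : realType) (V : lmodType R[i])
  (ev od : V -> Prop) (vac : V) (Y : V -> int -> V -> V) (T1 : V -> V)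
  (D : nat) (Tg : nat -> V -> V) (H : V -> V) (Om : nat -> nat -> V -> V)
  (Cg : nat -> V -> V) :
  (0 < D)%N ->
  vertex_algebra ev od vac Y T1 ->
  cD_action ev od D Tg H Om Cg ->
  (forall v, Tg 1%N v = T1 v) ->
  (cD_local ev od Y D Tg H Om Cg /\ cD_kills_vac vac D Tg H Om Cg) <->
  cD_comm_relations Y D Tg H Om Cg.
Proof.
move=> D_gt0 VA CA T1E; rewrite (cD_comm_relationsE D Tg H Om Cg VA); split.
  by case=> LOC KV; exact (quad_relations_of_local VA CA T1E D_gt0 LOC KV).
move=> REL; have local_vac := cD_local_vac VA CA T1E D_gt0 REL.
by split=> t h o c; have [locX Xvac] := local_vac t h o c.
Qed.
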